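(* Let $\kappa$ be an infinite cardinal. The map $f\colon S\to S$ defined by $f(A,B,C)=(\kappa\setminus A,\ \kappa\setminus(B\cup C),\ \kappa\setminus(A\cup B\cup C))$ for all $(A,B,C)\in S$ is a well-defined Banaschewski function on $S$.
   Context: $\mathcal{F}(\kappa)$ is the Boolean lattice of subsets $X\subseteq\kappa$ that are finite or cofinite. Let $\mu(A,B,C)=(A\cap B)\cup(A\cap C)\cup(B\cap C)$; a triple is balanced if $A\cap B=A\cap C=B\cap C$. $S$ is the set of balanced triples $(A,B,C)\in\mathcal{F}(\kappa)^3$ with $C\setminus\mu(A,B,C)$ finite, ordered componentwise; it is a bounded lattice with componentwise meet, join $(A,B,C)\vee(A',B',C')=(U_1\cup m,U_2\cup m,U_3\cup m)$ where $U_1=A\cup A'$, $U_2=B\cup B'$, $U_3=C\cup C'$, $m=\mu(U_1,U_2,U_3)$, and bounds $(\emptyset,\emptyset,\emptyset)$, $(\kappa,\kappa,\kappa)$. A Banaschewski function on a bounded lattice $L$ is a map $f\colon L\to L$ such that $x\le y$ implies $f(x)\ge f(y)$, and $x\wedge f(x)=0_L$, $x\vee f(x)=1_L$ for all $x\in L$. *)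

From mathcomp Require Import all_boot.
From mathcomp Require Import boolp classical_sets cardinality.
Set Implicit Arguments. Unset Strict Implicit. Unset Printing Implicit Defensive.
Local Open Scope classical_set_scope.

(* The infinite cardinal kappa is modelled by an arbitrary type T whose
   full set is infinite; subsets of kappa are elements of [set T]. *)

Definition finco {T : Type} (X : set T) : Prop :=
  finite_set X \/ finite_set (~` X).

Definition mu {T : Type} (A B C : set T) : set T :=
  (A `&` B) `|` (A `&` C) `|` (B `&` C).

Definition balanced {T : Type} (A B C : set T) : Prop :=
  A `&` B = A `&` C /\ A `&` C = B `&` C.

Definition triple (T : Type) := (set T * set T * set T)%type.

Definition inS {T : Type} (x : triple T) : Prop :=
  let: (A, B, C) := x in
  [/\ finco A, finco B, finco C, balanced A B C & finite_set (C `\` mu A B C)].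

Definition leS {T : Type} (x y : triple T) : Prop :=
  let: (A, B, C) := x in let: (A', B', C') := y in
  [/\ A `<=` A', B `<=` B' & C `<=` C'].

Definition meetS {T : Type} (x y : triple T) : triple T :=
  let: (A, B, C) := x in let: (A', B', C') := y in
  (A `&` A', B `&` B', C `&` C').

Definition joinS {T : Type} (x y : triple T) : triple T :=
  let: (A, B, C) := x in let: (A', B', C') := y in
  let U1 := A `|` A' in let U2 := B `|` B' in let U3 := C `|` C' in
  let m := mu U1 U2 U3 in
  (U1 `|` m, U2 `|` m, U3 `|` m).

Definition botS (T : Type) : triple T := (set0, set0, set0).
Definition topS (T : Type) : triple T := (setT, setT, setT).

(* Banaschewski function on the bounded lattice carried by the predicate P
   (with the given order, meet, join and bounds); "well-defined" = maps P into P. *)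
Definition Banaschewski_on {L : Type} (P : L -> Prop) (le : L -> L -> Prop)
  (meet join : L -> L -> L) (bot top : L) (f : L -> L) : Prop :=
  [/\ (forall x, P x -> P (f x)),
      (forall x y, P x -> P y -> le x y -> le (f y) (f x)),
      (forall x, P x -> meet x (f x) = bot)
    & (forall x, P x -> join x (f x) = top)].

Definition fS {T : Type} (x : triple T) : triple T :=
  let: (A, B, C) := x in
  (~` A, ~` (B `|` C), ~` (A `|` B `|` C)).

From mathcomp Require Import all_boot.
From mathcomp Require Import boolp classical_sets cardinality.
Local Open Scope classical_set_scope.

(* With A' = ~A and B' = ~(B u C), the image f(A,B,C) is (A', B', A' n B'),
   and any triple of the form (X, Y, X n Y) is balanced with empty
   C \ mu; closure of F(kappa) under complement and union gives the rest.
   The complementation laws x /\ f x = 0 and x \/ f x = 1 are pure Boolean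
   identities. *)

Section FinCofinite.
Variable T : Type.
Implicit Types X Y : set T.

Lemma finco_setC X : finco X -> finco (~` X).
Proof. by rewrite /finco setCK => -[]; [right|left]. Qed.

Lemma finco_setU X Y : finco X -> finco Y -> finco (X `|` Y).
Proof.
rewrite /finco setCU => -[finX|cofinX] [finY|cofinY].
- by left; rewrite finite_setU.
- by right; exact: finite_setIr.
- by right; exact: finite_setIl.
- by right; exact: finite_setIl.
Qed.

End FinCofinite.

Section Median.
Variable T : Type.
Implicit Types A B C X Y : set T.

Lemma balanced_setI X Y : balanced X Y (X `&` Y).
Proof.
have XI : X `&` (X `&` Y) = X `&` Y by rewrite setIA setIid.
have YI : Y `&` (X `&` Y) = X `&` Y by rewrite setIC -setIA setIid.
by split; rewrite XI ?YI.
Qed.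

Lemma setD_mu_eq0 A B C : C `<=` A -> C `\` mu A B C = set0.
Proof.
move=> CA; rewrite setD_eq0 => x Cx.
by left; right; split; [exact: CA|].
Qed.

Lemma muTl B C : mu setT B C = B `|` C.
Proof. by rewrite /mu !setTI setUidl // => x [Bx _]; left. Qed.

End Median.

Section Complement.
Variable T : Type.
Implicit Types x y : triple T.

Lemma fSE (A B C : set T) : fS (A, B, C) = (~` A, ~` (B `|` C), ~` A `&` ~` (B `|` C)).
Proof. by rewrite /= -setUA [~` (A `|` _)]setCU. Qed.

Lemma inS_fS x : inS x -> inS (fS x).
Proof.
case: x => [[A B] C] [finA finB finC _ _]; rewrite fSE.
have finBC : finco (B `|` C) by exact: finco_setU.
split.
- exact: finco_setC.
- exact: finco_setC.
- by rewrite -setCU; exact/finco_setC/finco_setU.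
- exact: balanced_setI.
- by rewrite setD_mu_eq0 ?finite_set0 //; exact: subIsetl.
Qed.

Lemma leS_fS x y : leS x y -> leS (fS y) (fS x).
Proof.
case: x y => [[A B] C] [[A' B'] C'] [AA' BB' CC'].
by split=> /=; apply: subsetC; do ?apply: setUSS.
Qed.

Lemma meetS_fS x : meetS x (fS x) = botS T.
Proof.
case: x => [[A B] C]; rewrite /= setICr.
by congr (_, _, _); apply/subsets_disjoint; [exact: subsetUl | exact: subsetUr].
Qed.

Lemma joinS_fS x : joinS x (fS x) = topS T.
Proof.
case: x => [[A B] C]; rewrite /= setUCr muTl.
suff -> : B `|` ~` (B `|` C) `|` (C `|` ~` (A `|` B `|` C)) = setT.
  by rewrite !setUT.
apply/seteqP; split=> // z _; case: (pselect ((B `|` C) z)) => [[Bz|Cz]|nBCz].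
- by left; left.
- by right; left.
- by left; right.
Qed.

End Complement.

Theorem lemma4p1 (T : Type) (hT : infinite_set [set: T]) :
  Banaschewski_on (@inS T) (@leS T) (@meetS T) (@joinS T) (botS T) (topS T) (@fS T).
Proof.
split=> [x|x y _ _|x _|x _].
- exact: inS_fS.
- exact: leS_fS.
- exact: meetS_fS.
- exact: joinS_fS.
Qed.
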